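(* For every integer $n\ge 0$, $${}_3F_2\!\left(\begin{matrix}-2n,\,-2n-1,\,\tfrac12\\ -2n+\tfrac12,\,2\end{matrix};1\right)=\frac{(2n+1)!\,(2n)!^3}{(4n)!\,n!^3\,(n+1)!},$$ and $${}_3F_2\!\left(\begin{matrix}-2n-1,\,-2n-2,\,\tfrac12\\ -2n-\tfrac12,\,2\end{matrix};1\right)=0.$$
   Context: ${}_3F_2\!\left(\begin{matrix}a_1,a_2,a_3\\ b_1,b_2\end{matrix};z\right)=\sum_{j\ge0}\frac{(a_1)_j(a_2)_j(a_3)_j}{(b_1)_j(b_2)_j}\frac{z^j}{j!}$, where $(x)_j=x(x+1)\cdots(x+j-1)$ is the Pochhammer symbol; when $a_1=-m$ is a nonpositive integer the series terminates at $j=m$. *)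

From HB Require Import structures.
From mathcomp Require Import all_boot all_order all_algebra.
Set Implicit Arguments. Unset Strict Implicit. Unset Printing Implicit Defensive.
Import Order.TTheory GRing.Theory Num.Theory.
Local Open Scope ring_scope.

Definition poch (R : pzRingType) (x : R) (j : nat) : R :=
  \prod_(i < j) (x + i%:R).

(* Terminating 3F2 with upper parameter a1 = -m (m : nat): the sum over
   j = 0..m of (a1)_j (a2)_j (a3)_j / ((b1)_j (b2)_j) z^j / j!. *)
Definition hyp3F2_term (F : fieldType) (m : nat) (a2 a3 b1 b2 z : F) : F :=
  \sum_(j < m.+1)
     poch (- m%:R) j * poch a2 j * poch a3 j / (poch b1 j * poch b2 j)
       * z ^+ j / (j`!)%:R.

From HB Require Import structures.
From mathcomp Require Import all_boot all_order all_algebra.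
From mathcomp Require Import ring lra zify.
Import Order.TTheory GRing.Theory Num.Theory.
Local Open Scope ring_scope.

(* Zeilberger's creative telescoping.  Let S m be the sum with top parameters
   -m, -m-1, 1/2 and bottom parameters -m+1/2, 2, and t m j its j-th term.
   Both t m j.+1 / t m j and t m j / t (m+2) j are rational functions of j,
   and for each parity of m there are a factor c m and a rational certificate
   g with
     c m * t m j - t (m+2) j = t (m+2) (j+1) g (j+1) - t (m+2) j g j,
   so summing over j gives S (m+2) = c m * S m.  For even m, c m is the ratio
   of consecutive values of the claimed closed form; for odd m the recurrence
   starts from S 1 = 0. *)

Lemma poch_recr (R : pzRingType) (x : R) j : poch x j.+1 = poch x j * (x + j%:R).
Proof. by rewrite /poch big_ord_recr. Qed.

Lemma poch_recl (R : pzRingType) (x : R) j : poch x j.+1 = x * poch (x + 1) j.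
Proof.
rewrite /poch big_ord_recl addr0; congr (_ * _); apply: eq_bigr => i _.
by rewrite lift0 -natr1 [_%:R + 1]addrC addrA.
Qed.

Lemma poch_add2 (R : comPzRingType) (x : R) j :
  x * (x + 1) * poch (x + 2) j = poch x j * ((x + j%:R) * (x + j%:R + 1)).
Proof.
transitivity (poch x j.+2); last by rewrite !poch_recr -natr1 addrA mulrA.
by rewrite poch_recl poch_recl -addrA mulrA.
Qed.

Lemma poch_add2E (F : fieldType) (x y : F) j : y = x + 2 -> x * (x + 1) != 0 ->
  poch y j = poch x j * ((x + j%:R) * (x + j%:R + 1)) / (x * (x + 1)).
Proof. by move=> -> nz; rewrite -poch_add2 mulrC mulKf. Qed.

Lemma poch_neq0 (R : idomainType) (x : R) j :
  (forall i, (i < j)%N -> x + i%:R != 0) -> poch x j != 0.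
Proof. by move=> nz; apply/prodf_neq0 => i _; apply: nz. Qed.

Lemma odd_natr_neq0 (R : numDomainType) (a b : nat) :
  2 * a%:R - 2 * b%:R + 1 != 0 :> R.
Proof. by rewrite addrAC subr_eq0 -!natrM natr1 eqr_nat; apply/eqP; lia. Qed.

Lemma natr_fact_neq0 (R : numDomainType) j : (j`!)%:R != 0 :> R.
Proof. by rewrite pnatr_eq0 -lt0n fact_gt0. Qed.

Lemma poch_half_neq0 (R : numFieldType) m j : poch (- m%:R + 1 / 2 : R) j != 0.
Proof.
apply: poch_neq0 => i _; apply: contra (odd_natr_neq0 R i m) => /eqP z.
have -> : 2 * i%:R - 2 * m%:R + 1 = 2 * (- m%:R + 1 / 2 + i%:R) :> R by field.
by rewrite z mulr0.
Qed.

Lemma poch_natS_neq0 (R : numDomainType) k j : poch (k.+1%:R : R) j != 0.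
Proof. by apply: poch_neq0 => i _; rewrite -natrD pnatr_eq0. Qed.

Lemma creative_telescoping (R : comPzRingType) (u v r s g : nat -> R) (c : R) K :
  (forall k, (k < K)%N -> u k = v k * r k) ->
  (forall k, (k < K)%N -> v k.+1 = v k * s k) ->
  (forall k, (k < K)%N -> c * r k - 1 = s k * g k.+1 - g k) ->
  g 0%N = 0 -> v K = 0 ->
  \sum_(k < K) v k = c * \sum_(k < K) u k.
Proof.
move=> uE vS cert g0 vK; apply/eqP; rewrite mulr_sumr eq_sym -subr_eq0 -sumrB.
rewrite -(big_mkord xpredT (fun k => c * u k - v k)).
rewrite (telescope_sumr_eq (fun k => v k * g k)) ?vK ?g0 ?mul0r ?mulr0 ?subr0 //.
move=> k /andP[_ ltkK].
rewrite uE // vS //; transitivity (v k * (c * r k - 1)); first by ring.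
by rewrite cert //; ring.
Qed.

Definition term (m j : nat) : rat :=
  poch (- m%:R) j * poch (- m%:R - 1) j * poch (1 / 2) j
    / (poch (- m%:R + 1 / 2) j * poch 2 j) * 1 ^+ j / (j`!)%:R.

Definition sum3F2 (m : nat) : rat :=
  hyp3F2_term m (- m%:R - 1) (1 / 2) (- m%:R + 1 / 2) 2 1.

Lemma sum3F2E m : sum3F2 m = \sum_(j < m.+1) term m j.
Proof. by []. Qed.

Lemma term_eq0 m j : (m < j)%N -> term m j = 0.
Proof. by move=> ltmj; rewrite /term /poch (bigD1 (Ordinal ltmj)) //= addNr !mul0r. Qed.

Lemma sum3F2_widen m K : (m < K)%N -> sum3F2 m = \sum_(j < K) term m j.
Proof.
move=> ltmK; rewrite sum3F2E -(subnKC ltmK) big_split_ord /=.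
by rewrite [X in _ = _ + X]big1 ?addr0 // => i _; apply: term_eq0; lia.
Qed.

Definition succ_ratio (m y : rat) : rat :=
  (y - m) * (y - m - 1) * (2 * y + 1) / ((2 * y + 1 - 2 * m) * (y + 2) * (y + 1)).

Lemma term_succ m j : term m j.+1 = term m j * succ_ratio m%:R j%:R.
Proof.
have j_ge0 := ler0n rat j.
have j1_neq0 : j%:R + 1 != 0 :> rat by apply: lt0r_neq0; lra.
have j2_neq0 : j%:R + 2 != 0 :> rat by apply: lt0r_neq0; lra.
have odd_neq0 : 2 * j%:R + 1 - 2 * m%:R != 0 :> rat by rewrite addrAC odd_natr_neq0.
have poch2_neq0 := poch_natS_neq0 rat 1 j.
have := poch_half_neq0 rat m j; have := natr_fact_neq0 rat j.
rewrite /term /succ_ratio !poch_recr factS natrM -natr1 !expr1n => fact_neq0 poch_neq0.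
field; rewrite j1_neq0 j2_neq0 odd_neq0 fact_neq0 poch_neq0 andbT.
exact: poch2_neq0.
Qed.

Definition shift_ratio (m y : rat) : rat :=
  (m + 2 - y) * (m + 1 - y) * (m + 3 - y) * (m + 2 - y) * (2 * m + 3) * (2 * m + 1)
   / ((m + 2) * (m + 1) * (m + 3) * (m + 2) * (2 * y - 2 * m - 3) * (2 * y - 2 * m - 1)).

Lemma term_shift m j : term m j = term m.+2 j * shift_ratio m%:R j%:R.
Proof.
have m_ge0 := ler0n rat m.
have mS2 : m.+2%:R = m%:R + 2 :> rat by ring.
have odd1_neq0 : 2 * j%:R - 2 * m%:R - 1 != 0 :> rat.
  by apply: contra_neq (odd_natr_neq0 rat j m.+1) => z; rewrite -z; ring.
have odd3_neq0 : 2 * j%:R - 2 * m%:R - 3 != 0 :> rat.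
  by apply: contra_neq (odd_natr_neq0 rat j m.+2) => z; rewrite -z; ring.
rewrite /term /shift_ratio mS2.
rewrite (@poch_add2E _ (- (m%:R + 2)) (- m%:R)); first last.
- by apply: lt0r_neq0; nra.
- by ring.
rewrite (@poch_add2E _ (- (m%:R + 2) - 1) (- m%:R - 1)); first last.
- by apply: lt0r_neq0; nra.
- by ring.
rewrite (@poch_add2E _ (- (m%:R + 2) + 1 / 2) (- m%:R + 1 / 2)); first last.
- by apply: lt0r_neq0; nra.
- by ring.
have poch2_neq0 := poch_natS_neq0 rat 1 j.
have fact_neq0 := natr_fact_neq0 rat j.
have := poch_half_neq0 rat m.+2 j; rewrite mS2 => poch_neq0.
field; rewrite odd1_neq0 odd3_neq0 fact_neq0 poch2_neq0 poch_neq0 /=.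
by repeat (apply/andP; split); first [apply: lt0r_neq0; lra | apply: ltr0_neq0; lra].
Qed.

Lemma sum3F2_rec m (c : rat) (g : rat -> rat) : g 0 = 0 ->
  (forall k, (k < m.+3)%N ->
     c * shift_ratio m%:R k%:R - 1 = succ_ratio m.+2%:R k%:R * g (k%:R + 1) - g k%:R) ->
  sum3F2 m.+2 = c * sum3F2 m.
Proof.
move=> g0 cert; rewrite sum3F2E (@sum3F2_widen m m.+3); last by rewrite ltnS leqW.
apply: (@creative_telescoping _ (term m) (term m.+2) (fun k => shift_ratio m%:R k%:R)
          (fun k => succ_ratio m.+2%:R k%:R) (fun k => g k%:R)) => //.
- by move=> k _; apply: term_shift.
- by move=> k _; apply: term_succ.
- by move=> k /cert; rewrite -(natr1 k).
- exact: term_eq0.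
Qed.

(* Zeilberger certificates for m = 2x and m = 2x + 1 (in the summation
   variable y), as produced by a computer algebra system. *)
Definition even_cert (x y : rat) : rat :=
  y * (- 2 * (x + 1) * (8 * x ^+ 2 + 13 * x + 3) + (1 - 12 * x - 30 * x ^+ 2 - 16 * x ^+ 3) * y
       + 6 * (x + 1) * (2 * x + 1) * y ^+ 2 - (2 * x + 1) * y ^+ 3)
  / (4 * (x + 1) ^+ 2 * (x + 2) * (2 * x + 3) * (2 * y - 4 * x - 3)).

Definition odd_cert (x y : rat) : rat :=
  - (y * ((16 * x ^+ 2 + 42 * x + 23) * (2 * x + 3) + (32 * x ^+ 3 + 108 * x ^+ 2 + 108 * x + 29) * y
       - 12 * (x + 1) * (2 * x + 3) * y ^+ 2 + 4 * (x + 1) * y ^+ 3))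
  / (2 * (x + 2) * (2 * x + 3) ^+ 2 * (2 * x + 5) * (2 * y - 4 * x - 5)).

Definition even_factor (x : rat) : rat :=
  2 * (2 * x + 3) * (2 * x + 1) ^+ 2 / ((4 * x + 3) * (4 * x + 1) * (x + 2)).

Definition odd_factor (x : rat) : rat :=
  32 * (x + 1) ^+ 2 * (x + 2) / ((2 * x + 5) * (4 * x + 3) * (4 * x + 5)).

Lemma even_certificate (x y : rat) : 0 <= x -> 0 <= y ->
  2 * y - 4 * x - 3 != 0 -> 2 * y - 4 * x - 1 != 0 ->
  even_factor x * shift_ratio (2 * x) y - 1
    = succ_ratio (2 * x + 2) y * even_cert x (y + 1) - even_cert x y.
Proof.
move=> x_ge0 y_ge0 nz3 nz1; rewrite /even_factor /shift_ratio /succ_ratio /even_cert.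
have -> : 2 * (y + 1) - 4 * x - 3 = 2 * y - 4 * x - 1 by ring.
field; rewrite nz3 nz1 /=.
by repeat (apply/andP; split); apply: lt0r_neq0; lra.
Qed.

Lemma odd_certificate (x y : rat) : 0 <= x -> 0 <= y ->
  2 * y - 4 * x - 5 != 0 -> 2 * y - 4 * x - 3 != 0 ->
  odd_factor x * shift_ratio (2 * x + 1) y - 1
    = succ_ratio (2 * x + 3) y * odd_cert x (y + 1) - odd_cert x y.
Proof.
move=> x_ge0 y_ge0 nz5 nz3; rewrite /odd_factor /shift_ratio /succ_ratio /odd_cert.
have -> : 2 * (y + 1) - 4 * x - 5 = 2 * y - 4 * x - 3 by ring.
field; rewrite nz5 nz3 /=.
by repeat (apply/andP; split); apply: lt0r_neq0; lra.
Qed.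

Lemma sum3F2_even_rec n : sum3F2 (2 * n.+1) = even_factor n%:R * sum3F2 (2 * n).
Proof.
rewrite (_ : (2 * n.+1 = (2 * n).+2)%N); last by lia.
apply: (@sum3F2_rec _ _ (even_cert n%:R)) => [|k _]; first by rewrite /even_cert !mul0r.
have -> : (2 * n).+2%:R = 2 * n%:R + 2 :> rat by ring.
rewrite natrM; apply: even_certificate; rewrite ?ler0n //.
- by apply: contra_neq (odd_natr_neq0 rat k (2 * n + 2)) => z; rewrite -z; ring.
- by apply: contra_neq (odd_natr_neq0 rat k (2 * n + 1)) => z; rewrite -z; ring.
Qed.

Lemma sum3F2_odd_rec n : sum3F2 (2 * n.+1 + 1) = odd_factor n%:R * sum3F2 (2 * n + 1).
Proof.
rewrite (_ : (2 * n.+1 + 1 = (2 * n + 1).+2)%N); last by lia.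
apply: (@sum3F2_rec _ _ (odd_cert n%:R)) => [|k _].
  by rewrite /odd_cert !(mul0r, oppr0).
have -> : (2 * n + 1).+2%:R = 2 * n%:R + 3 :> rat by ring.
have -> : (2 * n + 1)%:R = 2 * n%:R + 1 :> rat by ring.
apply: odd_certificate; rewrite ?ler0n //.
- by apply: contra_neq (odd_natr_neq0 rat k (2 * n + 3)) => z; rewrite -z; ring.
- by apply: contra_neq (odd_natr_neq0 rat k (2 * n + 2)) => z; rewrite -z; ring.
Qed.

Lemma sum3F2_odd_eq0 n : sum3F2 (2 * n + 1) = 0.
Proof.
elim: n => [|n IHn]; last by rewrite sum3F2_odd_rec IHn mulr0.
by rewrite sum3F2E !big_ord_recr big_ord0 /term /poch !big_ord_recr !big_ord0 /=; field.
Qed.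

Definition closed_form (n : nat) : rat :=
  ((2 * n + 1)`! * (2 * n)`! ^ 3)%:R / ((4 * n)`! * n`! ^ 3 * n.+1`!)%:R.

Lemma closed_form_rec n : closed_form n.+1 = even_factor n%:R * closed_form n.
Proof.
rewrite /closed_form /even_factor !addn1.
rewrite (_ : (2 * n.+1).+1 = (2 * n).+3)%N; last by lia.
rewrite (_ : (2 * n.+1 = (2 * n).+2)%N); last by lia.
rewrite (_ : (4 * n.+1 = (4 * n).+4)%N); last by lia.
rewrite !factS !(natrM, natrX).
have n_ge0 := ler0n rat n.
field; rewrite !natr_fact_neq0 /=.
by repeat (apply/andP; split); apply: lt0r_neq0; lra.
Qed.

Lemma sum3F2_even n : sum3F2 (2 * n) = closed_form n.
Proof.
elim: n => [|n IHn]; last by rewrite sum3F2_even_rec closed_form_rec IHn.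
by rewrite sum3F2E big_ord1 /term /closed_form /poch !big_ord0.
Qed.

Theorem mainTheorem8 (n : nat) :
  hyp3F2_term (F := rat) (2 * n) (- (2 * n)%:R - 1) (1 / 2)
      (- (2 * n)%:R + 1 / 2) 2 1
    = ((2 * n + 1)`! * (2 * n)`! ^ 3)%:R / ((4 * n)`! * n`! ^ 3 * n.+1`!)%:R
  /\
  hyp3F2_term (F := rat) (2 * n + 1) (- (2 * n)%:R - 2) (1 / 2)
      (- (2 * n)%:R - 1 / 2) 2 1 = 0.
Proof.
split; first exact: sum3F2_even.
have -> : - (2 * n)%:R - 2 = - (2 * n + 1)%:R - 1 :> rat by ring.
have -> : - (2 * n)%:R - 1 / 2 = - (2 * n + 1)%:R + 1 / 2 :> rat by field.
exact: sum3F2_odd_eq0.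
Qed.
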